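(* Let $\alpha=(\alpha_n)_{n\in\mathbb{N}}\in\ell^2$. The Rhaly operator $R_\alpha$ is bounded on $\ell^2$ if and only if the sequence $(\sigma_k)_{k\ge-1}$ is bounded. Moreover $$\frac{1}{\sqrt2}\sup_{h\ge-1}\sigma_h\le\|R_\alpha\|\le4\sqrt2\sup_{h\ge-1}\sigma_h.$$
   Context: $\mathbb{N}=\{0,1,2,\dots\}$; $\ell^2$ is the space of square-summable functions $\mathbb{N}\to\mathbb{C}$. The Rhaly operator is $(R_\alpha f)(k)=\alpha_k\sum_{j=0}^k f(j)$, with operator norm $\|R_\alpha\|=\sup_{\|f\|_2=1}\|R_\alpha f\|_2$ (possibly $+\infty$). Define $\sigma_{-1}=|\alpha_0|$ and, for $k\in\mathbb{N}$, $\sigma_k=\big(\sum_{j=2^k}^{2^{k+1}-1}(j+1)|\alpha_j|^2\big)^{1/2}$. *)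

From Stdlib Require Import Reals.
From Coquelicot Require Import Coquelicot.
Open Scope R_scope.

Definition sq_summable (f : nat -> C) : Prop :=
  ex_series (fun n => (Cmod (f n)) ^ 2).

Definition l2norm (f : nat -> C) : R :=
  sqrt (Series (fun n => (Cmod (f n)) ^ 2)).

Definition l2normE (f : nat -> C) : Rbar :=
  match Lim_seq (fun n => sum_n (fun k => (Cmod (f k)) ^ 2) n) with
  | Finite r => Finite (sqrt r)
  | p_infty => p_infty
  | m_infty => Finite 0
  end.

Definition Rhaly (alpha f : nat -> C) (k : nat) : C :=
  Cmult (alpha k) (sum_n f k).

Definition opnorm (alpha : nat -> C) : Rbar :=
  Rbar_lub (fun r => exists f, sq_summable f /\ l2norm f = 1 /\ r = l2normE (Rhaly alpha f)).

Definition Rhaly_bounded (alpha : nat -> C) : Prop :=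
  exists M : R, forall f, sq_summable f ->
    sq_summable (Rhaly alpha f) /\ l2norm (Rhaly alpha f) <= M * l2norm f.

Definition sigma_m1 (alpha : nat -> C) : R := Cmod (alpha 0%nat).
Definition sigma (alpha : nat -> C) (k : nat) : R :=
  sqrt (sum_n_m (fun j => (INR j + 1) * (Cmod (alpha j)) ^ 2) (2 ^ k)%nat (2 ^ (k + 1) - 1)%nat).

Definition sigma_bounded (alpha : nat -> C) : Prop :=
  exists M : R, sigma_m1 alpha <= M /\ forall k, sigma alpha k <= M.

Definition sup_sigma (alpha : nat -> C) : Rbar :=
  Rbar_lub (fun r => r = Finite (sigma_m1 alpha) \/ exists k, r = Finite (sigma alpha k)).

From Pilot Require Import Defs.
From Stdlib Require Import Reals Lra Lia Compare_dec.
From Coquelicot Require Import Coquelicot.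
Open Scope R_scope.

(* Upper bound: Cauchy-Schwarz with the weights [w j = (3/4)^(dyadic_index j)], which are
   constant on the dyadic blocks [2^m <= j < 2^(m+1)], gives
   [|sum_(j<=k) f j|^2 <= 2 (3/2)^(dyadic_index k) sum_(j<=k) |f j|^2 / w j].
   After exchanging the order of summation, the tail [sum_(k>=j) |alpha k|^2 (3/2)^(dyadic_index k)]
   is a geometric series over the blocks, each block being controlled by [sigma_h^2], and is at
   most [8 (sup sigma)^2 w j].  Hence [||R_alpha f|| <= 4 sup sigma ||f||], better than [4 sqrt 2].
   Lower bound: [R_alpha] maps the normalised indicator of [0, 2^(h+1)) to a vector of squared
   norm at least [sigma_h^2 / 2] (the indicator of [{0}] handles [sigma_(-1)]). *)

(* Coquelicot states its sums with the generic [plus] and [zero]; expose them on [R]. *)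
Ltac fold_Rops :=
  repeat change (@plus _ ?x ?y) with (Rplus x y);
  repeat change (@zero _) with R0;
  try match goal with |- @eq _ ?x ?y => change (@eq R x y) end.

Lemma sum_n_m_Rmult_l (c : R) (a : nat -> R) (n m : nat) :
  sum_n_m (fun k => c * a k) n m = c * sum_n_m a n m.
Proof. exact (sum_n_m_mult_l c a n m). Qed.

Lemma sum_n_m_Rmult_r (c : R) (a : nat -> R) (n m : nat) :
  sum_n_m (fun k => a k * c) n m = sum_n_m a n m * c.
Proof. exact (sum_n_m_mult_r c a n m). Qed.

Lemma sum_n_m_le_loc (a b : nat -> R) (n m : nat) :
  (forall k, (n <= k <= m)%nat -> a k <= b k) -> sum_n_m a n m <= sum_n_m b n m.
Proof.
  intros Hab.
  set (a' k := if le_dec n k then if le_dec k m then a k else b k else b k).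
  rewrite (sum_n_m_ext_loc a a').
  - apply sum_n_m_le. intros k. unfold a'.
    destruct (le_dec n k), (le_dec k m); try lra. apply Hab; lia.
  - intros k Hk. unfold a'.
    destruct (le_dec n k), (le_dec k m); [reflexivity | lia ..].
Qed.

Lemma sum_n_m_nonneg (a : nat -> R) (n m : nat) :
  (forall k, 0 <= a k) -> 0 <= sum_n_m a n m.
Proof.
  intros Ha. apply Rle_trans with (sum_n_m (fun _ => 0) n m).
  - rewrite sum_n_m_const. lra.
  - now apply sum_n_m_le.
Qed.

Lemma sum_n_m_le_subrange (a : nat -> R) (n m n' m' : nat) :
  (forall k, 0 <= a k) -> (n' <= n)%nat -> (m <= m')%nat ->
  sum_n_m a n m <= sum_n_m a n' m'.
Proof.
  intros Ha Hn Hm.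
  destruct (Nat.lt_ge_cases m n) as [Hmn | Hnm].
  { rewrite sum_n_m_zero by lia. now apply sum_n_m_nonneg. }
  destruct n as [| n].
  - assert (n' = 0%nat) as -> by lia.
    rewrite (sum_n_m_Chasles a 0 m m') by lia. fold_Rops.
    pose proof (sum_n_m_nonneg a (S m) m' Ha). lra.
  - rewrite (sum_n_m_Chasles a n' n m') by lia.
    rewrite (sum_n_m_Chasles a (S n) m m') by lia.
    fold_Rops.
    pose proof (sum_n_m_nonneg a n' n Ha). pose proof (sum_n_m_nonneg a (S m) m' Ha). lra.
Qed.

Lemma sum_n_le_sum_n (a : nat -> R) (n m : nat) :
  (forall k, 0 <= a k) -> (n <= m)%nat -> sum_n a n <= sum_n a m.
Proof. intros; now apply sum_n_m_le_subrange. Qed.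

Lemma sum_n_sqr_le_weighted (g w : nat -> R) (k : nat) :
  (forall j, 0 < w j) ->
  (sum_n g k) ^ 2 <= sum_n w k * sum_n (fun j => g j ^ 2 / w j) k.
Proof.
  intros Hw.
  enough (0 < sum_n w k /\ (sum_n g k) ^ 2 <= sum_n w k * sum_n (fun j => g j ^ 2 / w j) k)
    by tauto.
  induction k as [| k [HV IH]].
  - rewrite !sum_O. specialize (Hw 0%nat). split; [lra |]. right. field. lra.
  - rewrite !sum_Sn. fold_Rops.
    set (G := sum_n g k) in *. set (V := sum_n w k) in *.
    set (Q := sum_n (fun j => g j ^ 2 / w j) k) in *.
    specialize (Hw (S k)). set (y := w (S k)) in *.
    set (t := g (S k) / y).
    replace (g (S k)) with (t * y) by (unfold t; field; lra).
    replace ((t * y) ^ 2 / y) with (t ^ 2 * y) by (field; lra).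
    split; [lra |].
    (* [G^2 <= V Q] gives [V t^2 - 2 G t + Q >= 0], the discriminant bound for the new term *)
    assert (Hq : 0 <= V * t ^ 2 - 2 * G * t + Q).
    { apply Rmult_le_reg_l with V; [lra |]. pose proof (pow2_ge_0 (V * t - G)). nra. }
    pose proof (Rmult_le_pos y _ (Rlt_le _ _ Hw) Hq). nra.
Qed.

Lemma sum_n_mult_sum_n (c q : nat -> R) (N : nat) :
  sum_n (fun k => c k * sum_n q k) N = sum_n (fun j => q j * sum_n_m c j N) N.
Proof.
  induction N as [| N IH].
  - rewrite !sum_O, sum_n_n. fold_Rops. ring.
  - rewrite !sum_Sn. fold_Rops. rewrite IH, sum_n_n.
    rewrite (sum_n_ext_loc (fun j => q j * sum_n_m c j (S N))
               (fun j => q j * sum_n_m c j N + c (S N) * q j)).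
    2: { intros j Hj. rewrite sum_n_Sm by lia. fold_Rops. ring. }
    rewrite (sum_n_plus (fun j => q j * sum_n_m c j N) (fun j => c (S N) * q j)).
    fold_Rops. unfold sum_n. rewrite sum_n_m_Rmult_l. ring.
Qed.

Definition dyadic_index (j : nat) : nat := Nat.log2 (2 * j + 1).

Lemma pow2_pos (m : nat) : (1 <= 2 ^ m)%nat.
Proof. pose proof (Nat.pow_nonzero 2 m). lia. Qed.

Lemma pow2_add1 (m : nat) : (2 ^ (m + 1) = 2 * 2 ^ m)%nat.
Proof. rewrite Nat.add_1_r, Nat.pow_succ_r'; lia. Qed.

Lemma INR_pow2 (m : nat) : INR (2 ^ m) = 2 ^ m.
Proof. rewrite pow_INR. reflexivity. Qed.

Lemma lt_pow2_dyadic_index (j : nat) : (j < 2 ^ dyadic_index j)%nat.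
Proof.
  unfold dyadic_index. destruct (Nat.log2_spec (2 * j + 1)) as [_ H]; [lia |].
  rewrite Nat.pow_succ_r' in H; lia.
Qed.

Lemma dyadic_index_block (m j : nat) :
  (2 ^ m <= j <= 2 ^ (m + 1) - 1)%nat -> dyadic_index j = S m.
Proof.
  intros Hj. pose proof (pow2_pos m). rewrite pow2_add1 in Hj.
  apply Nat.log2_unique; [lia |]. rewrite !Nat.pow_succ_r'; lia.
Qed.

Lemma sum_n_dyadic_weight_le (k : nat) :
  sum_n (fun j => (3/4) ^ dyadic_index j) k <= 2 * (3/2) ^ dyadic_index k.
Proof.
  set (w j := (3/4) ^ dyadic_index j).
  assert (Hw : forall j, 0 <= w j) by (intros; apply pow_le; lra).
  assert (Hblocks : forall m, sum_n w (2 ^ m - 1) <= 2 * (3/2) ^ m).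
  { induction m as [| m IH].
    - rewrite sum_O. unfold w. simpl. lra.
    - pose proof (pow2_pos m).
      unfold sum_n. rewrite (sum_n_m_Chasles w 0 (2 ^ m - 1) (2 ^ S m - 1))
        by (rewrite ?Nat.pow_succ_r'; lia).
      fold_Rops.
      rewrite (sum_n_m_ext_loc w (fun _ => (3/4) ^ S m) (S (2 ^ m - 1))).
      2: { intros j Hj. unfold w. rewrite (dyadic_index_block m j); [reflexivity |].
           rewrite Nat.add_1_r. lia. }
      rewrite sum_n_m_const.
      replace (S (2 ^ S m - 1) - S (2 ^ m - 1))%nat with (2 ^ m)%nat
        by (rewrite ?Nat.pow_succ_r'; lia).
      rewrite INR_pow2.
      replace (2 ^ m * (3/4) ^ S m) with (3/4 * (3/2) ^ m)
        by (replace (3/2) with (2 * (3/4)) by lra; rewrite Rpow_mult_distr; simpl; ring).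
      fold (sum_n w (2 ^ m - 1)). simpl. pose proof (pow_le (3/2) m ltac:(lra)). lra. }
  apply Rle_trans with (sum_n w (2 ^ dyadic_index k - 1)); [| apply Hblocks].
  apply sum_n_le_sum_n; [exact Hw |]. pose proof (lt_pow2_dyadic_index k). lia.
Qed.

Section DyadicHardy.

Variables (a : nat -> R) (S2 : R).
Hypothesis a_nonneg : forall k, 0 <= a k.
Hypothesis a0_le : a 0%nat <= S2.
Hypothesis block_le :
  forall m, sum_n_m (fun j => (INR j + 1) * a j) (2 ^ m) (2 ^ (m + 1) - 1) <= S2.

Let c (k : nat) : R := a k * (3/2) ^ dyadic_index k.

Let c_nonneg (k : nat) : 0 <= c k.
Proof. apply Rmult_le_pos; [apply a_nonneg | apply pow_le; lra]. Qed.

Let S2_nonneg : 0 <= S2.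
Proof. pose proof (a_nonneg 0). lra. Qed.

Lemma sum_n_m_dyadic_block_le (m : nat) :
  sum_n_m c (2 ^ m) (2 ^ (m + 1) - 1) <= 3/2 * S2 * (3/4) ^ m.
Proof.
  rewrite (sum_n_m_ext_loc c (fun k => a k * (3/2) ^ S m))
    by (intros j Hj; unfold c; now rewrite (dyadic_index_block m j)).
  rewrite sum_n_m_Rmult_r.
  set (A := sum_n_m a (2 ^ m) (2 ^ (m + 1) - 1)).
  (* on the m-th block the weight [j + 1] is at least [2^m] *)
  assert (HA : 2 ^ m * A <= S2).
  { eapply Rle_trans; [| apply (block_le m)].
    unfold A. rewrite <- sum_n_m_Rmult_l.
    apply sum_n_m_le_loc. intros k Hk.
    apply Rmult_le_compat_r; [apply a_nonneg |].
    rewrite <- INR_pow2. pose proof (le_INR _ _ (proj1 Hk)). lra. }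
  replace ((3/2) ^ S m) with (3/2 * (2 ^ m * (3/4) ^ m))
    by (rewrite <- Rpow_mult_distr; replace (2 * (3/4)) with (3/2) by lra; reflexivity).
  pose proof (pow_le (3/4) m ltac:(lra)).
  nra.
Qed.

Lemma sum_n_m_dyadic_blocks_le (n m : nat) :
  sum_n_m c (2 ^ m) (2 ^ (m + n) - 1) <= 6 * S2 * (3/4) ^ m.
Proof.
  revert m. induction n as [| n IH]; intros m; pose proof (pow2_pos m).
  - rewrite Nat.add_0_r, sum_n_m_zero by lia. fold_Rops.
    apply Rmult_le_pos; [pose proof S2_nonneg; lra | apply pow_le; lra].
  - assert (Hle : (2 ^ (m + 1) <= 2 ^ (m + S n))%nat) by (apply Nat.pow_le_mono_r; lia).
    rewrite (sum_n_m_Chasles c (2 ^ m) (2 ^ (m + 1) - 1)) by (rewrite pow2_add1 in *; lia).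
    fold_Rops.
    replace (S (2 ^ (m + 1) - 1)) with (2 ^ S m)%nat
      by (rewrite pow2_add1, Nat.pow_succ_r'; lia).
    replace (m + S n)%nat with (S m + n)%nat by lia.
    pose proof (sum_n_m_dyadic_block_le m). pose proof (IH (S m)).
    simpl pow in *. pose proof (pow_le (3/4) m ltac:(lra)).
    nra.
Qed.

Lemma sum_n_m_dyadic_tail_le (j N : nat) :
  sum_n_m c j N <= 8 * S2 * (3/4) ^ dyadic_index j.
Proof.
  destruct j as [| j].
  - (* the index [0] lies outside every dyadic block and is bounded by [a0_le] *)
    change (dyadic_index 0) with 0%nat. simpl pow.
    destruct N as [| N].
    + rewrite sum_n_n. unfold c. change (dyadic_index 0) with 0%nat. simpl. lra.
    + rewrite sum_Sn_m by lia. fold_Rops.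
      assert (HN : (S N < 2 ^ S N)%nat) by (apply Nat.pow_gt_lin_r; lia).
      pose proof (sum_n_m_le_subrange c 1 (S N) (2 ^ 0) (2 ^ (0 + S N) - 1) c_nonneg
                    ltac:(simpl; lia) ltac:(rewrite Nat.add_0_l; lia)).
      pose proof (sum_n_m_dyadic_blocks_le (S N) 0).
      unfold c at 1. change (dyadic_index 0) with 0%nat. simpl pow in *. lra.
  - set (m := Nat.log2 (S j)).
    destruct (Nat.log2_spec (S j)) as [L1 L2]; [lia |]. fold m in L1, L2.
    rewrite (dyadic_index_block m (S j))
      by (rewrite pow2_add1; rewrite Nat.pow_succ_r' in L2; lia).
    assert (N < 2 ^ N)%nat by (apply Nat.pow_gt_lin_r; lia).
    assert (2 ^ N <= 2 ^ (m + N))%nat by (apply Nat.pow_le_mono_r; lia).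
    eapply Rle_trans.
    { apply (sum_n_m_le_subrange c _ _ (2 ^ m) (2 ^ (m + N) - 1)); [exact c_nonneg | lia ..]. }
    pose proof (sum_n_m_dyadic_blocks_le N m).
    pose proof (pow_le (3/4) m ltac:(lra)). simpl pow. nra.
Qed.

Lemma sum_n_dyadic_hardy_le (g : nat -> R) (N : nat) :
  sum_n (fun k => a k * (sum_n g k) ^ 2) N <= 16 * S2 * sum_n (fun j => g j ^ 2) N.
Proof.
  set (w j := (3/4) ^ dyadic_index j).
  assert (Hw : forall j, 0 < w j) by (intros; apply pow_lt; lra).
  set (q j := g j ^ 2 / w j).
  assert (Hq : forall j, 0 <= q j).
  { intros j. apply Rmult_le_pos; [apply pow2_ge_0 | apply Rlt_le, Rinv_0_lt_compat, Hw]. }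
  apply Rle_trans with (sum_n (fun k => 2 * c k * sum_n q k) N).
  { apply sum_n_m_le. intros k.
    pose proof (sum_n_sqr_le_weighted g w k Hw) as HCS.
    pose proof (sum_n_dyadic_weight_le k) as HV.
    assert (0 <= sum_n q k) by (apply sum_n_m_nonneg; exact Hq).
    fold w q in HCS, HV. unfold c.
    apply Rle_trans with (a k * (sum_n w k * sum_n q k)).
    { now apply Rmult_le_compat_l. }
    replace (2 * (a k * (3/2) ^ dyadic_index k) * sum_n q k)
      with (a k * (2 * (3/2) ^ dyadic_index k * sum_n q k)) by ring.
    apply Rmult_le_compat_l; [apply a_nonneg |]. now apply Rmult_le_compat_r. }
  rewrite sum_n_mult_sum_n.
  apply Rle_trans with (sum_n (fun j => 16 * S2 * g j ^ 2) N).
  { apply sum_n_m_le. intros j.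
    rewrite sum_n_m_Rmult_l.
    pose proof (sum_n_m_dyadic_tail_le j N) as Htail. specialize (Hw j). specialize (Hq j).
    replace (16 * S2 * g j ^ 2) with (q j * (16 * S2 * w j)) by (unfold q; field; lra).
    apply Rmult_le_compat_l; [exact Hq |]. fold (w j) in Htail. lra. }
  unfold sum_n. rewrite sum_n_m_Rmult_l. lra.
Qed.

End DyadicHardy.

Lemma sum_n_le_Lim_seq (u : nat -> R) (N : nat) :
  (forall k, 0 <= u k) -> Rbar_le (sum_n u N) (Lim_seq (sum_n u)).
Proof.
  intros Hu. rewrite <- (Lim_seq_const (sum_n u N)).
  apply Lim_seq_le_loc. exists N. intros n Hn. now apply sum_n_le_sum_n.
Qed.

Lemma Lim_seq_sum_n_Series (u : nat -> R) :
  ex_series u -> Lim_seq (sum_n u) = Series u.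
Proof. intros Hs. apply is_lim_seq_unique. exact (Series_correct u Hs). Qed.

Lemma sum_n_le_Series (u : nat -> R) (N : nat) :
  (forall k, 0 <= u k) -> ex_series u -> sum_n u N <= Series u.
Proof.
  intros Hu Hs. pose proof (sum_n_le_Lim_seq u N Hu) as H.
  now rewrite Lim_seq_sum_n_Series in H.
Qed.

Lemma ex_series_le_of_sum_n (u : nat -> R) (B : R) :
  (forall k, 0 <= u k) -> (forall N, sum_n u N <= B) -> ex_series u /\ Series u <= B.
Proof.
  intros Hu HB.
  assert (Hlim : is_lim_seq (sum_n u) (Lim_seq (sum_n u))).
  { apply Lim_seq_correct, ex_lim_seq_incr. intros n. apply sum_n_le_sum_n; [exact Hu | lia]. }
  assert (Hub : Rbar_le (Lim_seq (sum_n u)) B).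
  { rewrite <- (Lim_seq_const B). apply Lim_seq_le_loc. now exists 0%nat. }
  pose proof (sum_n_le_Lim_seq u 0 Hu) as Hlb.
  unfold Series. destruct (Lim_seq (sum_n u)) as [l | |]; simpl in Hub, Hlb |- *;
    try contradiction.
  split; [now exists l | exact Hub].
Qed.

Definition l2sum (f : nat -> C) (N : nat) : R := sum_n (fun k => Cmod (f k) ^ 2) N.

Lemma sqr_Cmod_nonneg (f : nat -> C) (k : nat) : 0 <= Cmod (f k) ^ 2.
Proof. apply pow2_ge_0. Qed.

Lemma l2normE_ge_l2sum (f : nat -> C) (N : nat) :
  Rbar_le (sqrt (l2sum f N)) (l2normE f).
Proof.
  pose proof (sum_n_le_Lim_seq _ N (sqr_Cmod_nonneg f)) as H.
  unfold l2normE, l2sum in *.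
  destruct (Lim_seq _) as [l | |]; simpl in H |- *; [| exact I | contradiction].
  now apply sqrt_le_1_alt.
Qed.

Lemma l2normE_l2norm (f : nat -> C) : sq_summable f -> l2normE f = l2norm f.
Proof.
  intros Hf. unfold l2normE.
  replace (Lim_seq _) with (Finite (Series (fun k => Cmod (f k) ^ 2))); [reflexivity |].
  symmetry. exact (Lim_seq_sum_n_Series _ Hf).
Qed.

Lemma l2sum_Rhaly_le (alpha f : nat -> C) (N : nat) :
  l2sum (Rhaly alpha f) N <=
  sum_n (fun k => Cmod (alpha k) ^ 2 * (sum_n (fun j => Cmod (f j)) k) ^ 2) N.
Proof.
  unfold l2sum. apply sum_n_m_le. intros k. unfold Rhaly.
  rewrite Cmod_mult, Rpow_mult_distr.
  apply Rmult_le_compat_l; [apply pow2_ge_0 |].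
  apply pow_incr. split; [apply Cmod_ge_0 | apply (norm_sum_n_m f 0 k)].
Qed.

Lemma sqr_sigma (alpha : nat -> C) (k : nat) :
  Defs.sigma alpha k ^ 2 =
  sum_n_m (fun j => (INR j + 1) * Cmod (alpha j) ^ 2) (2 ^ k) (2 ^ (k + 1) - 1).
Proof.
  apply pow2_sqrt, sum_n_m_nonneg. intros j.
  apply Rmult_le_pos; [pose proof (pos_INR j); lra | apply pow2_ge_0].
Qed.

Lemma Rhaly_l2norm_le (alpha : nat -> C) (M : R) (f : nat -> C) :
  sigma_m1 alpha <= M -> (forall k, Defs.sigma alpha k <= M) -> sq_summable f ->
  sq_summable (Rhaly alpha f) /\ l2norm (Rhaly alpha f) <= 4 * M * l2norm f.
Proof.
  intros H0 Hk Hf. unfold sigma_m1 in H0.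
  assert (HM : 0 <= M) by (pose proof (Cmod_ge_0 (alpha 0%nat)); lra).
  set (X := Series (fun k => Cmod (f k) ^ 2)).
  assert (Hpartial : forall N, l2sum (Rhaly alpha f) N <= (4 * M) ^ 2 * X).
  { intros N. eapply Rle_trans; [apply l2sum_Rhaly_le |].
    eapply Rle_trans; [apply (sum_n_dyadic_hardy_le _ (M ^ 2)) |].
    - intros k. apply pow2_ge_0.
    - apply pow_incr. split; [apply Cmod_ge_0 | exact H0].
    - intros m. rewrite <- sqr_sigma. apply pow_incr. split; [apply sqrt_pos | apply Hk].
    - replace ((4 * M) ^ 2) with (16 * M ^ 2) by ring.
      apply Rmult_le_compat_l; [nra |].
      exact (sum_n_le_Series _ N (sqr_Cmod_nonneg f) Hf). }
  destruct (ex_series_le_of_sum_n _ _ (sqr_Cmod_nonneg _) Hpartial) as [Hs Hle].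
  split; [exact Hs |].
  unfold l2norm. fold X.
  rewrite <- (sqrt_pow2 (4 * M)) by lra. rewrite <- sqrt_mult_alt by apply pow2_ge_0.
  now apply sqrt_le_1_alt.
Qed.

Definition box (n j : nat) : C := if (j <? n)%nat then RtoC (/ sqrt (INR n)) else RtoC 0.

Lemma sqr_Cmod_box (n j : nat) :
  (1 <= n)%nat -> Cmod (box n j) ^ 2 = if (j <? n)%nat then / INR n else 0.
Proof.
  intros Hn. assert (Hp : 0 < INR n) by (apply lt_0_INR; lia).
  pose proof (sqrt_lt_R0 _ Hp).
  unfold box. destruct (j <? n)%nat; rewrite Cmod_R.
  - rewrite Rabs_pos_eq by (apply Rlt_le, Rinv_0_lt_compat; lra).
    rewrite pow_inv, pow2_sqrt; lra.
  - rewrite Rabs_R0. simpl. ring.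
Qed.

Lemma l2sum_box (n N : nat) : (1 <= n)%nat -> l2sum (box n) N = INR (Nat.min (S N) n) / INR n.
Proof.
  intros Hn. assert (INR n <> 0) by (apply not_0_INR; lia).
  unfold l2sum. induction N as [| N IH].
  - rewrite sum_O, sqr_Cmod_box by exact Hn.
    destruct (Nat.ltb_spec 0 n); [| lia].
    replace (Nat.min 1 n) with 1%nat by lia. simpl. field. assumption.
  - rewrite sum_Sn. fold_Rops. rewrite IH, sqr_Cmod_box by exact Hn.
    destruct (Nat.ltb_spec (S N) n).
    + replace (Nat.min (S N) n) with (S N) by lia.
      replace (Nat.min (S (S N)) n) with (S (S N)) by lia.
      rewrite (S_INR (S N)). field. assumption.
    + replace (Nat.min (S N) n) with n by lia.
      replace (Nat.min (S (S N)) n) with n by lia. ring.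
Qed.

Lemma box_unit (n : nat) : (1 <= n)%nat -> sq_summable (box n) /\ l2norm (box n) = 1.
Proof.
  intros Hn. assert (Hp : 0 < INR n) by (apply lt_0_INR; lia).
  assert (Hle : forall N, l2sum (box n) N <= 1).
  { intros N. rewrite l2sum_box by exact Hn.
    pose proof (le_INR _ _ (Nat.le_min_r (S N) n)).
    apply Rmult_le_reg_r with (INR n); [exact Hp |]. field_simplify; lra. }
  destruct (ex_series_le_of_sum_n _ _ (sqr_Cmod_nonneg _) Hle) as [Hs Hub].
  split; [exact Hs |].
  pose proof (sum_n_le_Series _ (n - 1) (sqr_Cmod_nonneg (box n)) Hs) as Hlb.
  fold (l2sum (box n) (n - 1)) in Hlb. rewrite l2sum_box in Hlb by exact Hn.
  replace (Nat.min (S (n - 1)) n) with n in Hlb by lia.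
  rewrite Rdiv_diag in Hlb by lra.
  unfold l2norm. replace (Series _) with 1 by lra. apply sqrt_1.
Qed.

Lemma sum_n_box (n k : nat) : (k < n)%nat -> sum_n (box n) k = RtoC (INR (S k) / sqrt (INR n)).
Proof.
  intros Hk. induction k as [| k IH].
  - rewrite sum_O. unfold box. destruct (Nat.ltb_spec 0 n); [| lia].
    f_equal. simpl. unfold Rdiv. ring.
  - rewrite sum_Sn, IH by lia. unfold box. destruct (Nat.ltb_spec (S k) n); [| lia].
    change (plus ?x ?y) with (Cplus x y).
    rewrite <- RtoC_plus. f_equal. rewrite (S_INR (S k)). unfold Rdiv. ring.
Qed.

Lemma l2sum_Rhaly_box (alpha : nat -> C) (n : nat) :
  (1 <= n)%nat ->
  l2sum (Rhaly alpha (box n)) (n - 1) =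
  sum_n (fun k => Cmod (alpha k) ^ 2 * INR (S k) ^ 2 / INR n) (n - 1).
Proof.
  intros Hn. assert (Hp : 0 < INR n) by (apply lt_0_INR; lia).
  pose proof (sqrt_lt_R0 _ Hp).
  unfold l2sum. apply sum_n_ext_loc. intros k Hk.
  unfold Rhaly. rewrite sum_n_box, Cmod_mult, Cmod_R by lia.
  rewrite Rabs_pos_eq
    by (apply Rmult_le_pos; [apply pos_INR | apply Rlt_le, Rinv_0_lt_compat; lra]).
  fold_Rops. unfold Rdiv. rewrite !Rpow_mult_distr, pow_inv, pow2_sqrt by lra. ring.
Qed.

Definition sigma_family (alpha : nat -> C) (s : R) : Prop :=
  s = sigma_m1 alpha \/ exists k, s = Defs.sigma alpha k.

Lemma sigma_family_nonneg (alpha : nat -> C) (s : R) : sigma_family alpha s -> 0 <= s.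
Proof. intros [-> | [k ->]]; [apply Cmod_ge_0 | apply sqrt_pos]. Qed.

Lemma sigma_family_le_l2sum_Rhaly_box (alpha : nat -> C) (s : R) :
  sigma_family alpha s ->
  exists n, (1 <= n)%nat /\ s ^ 2 / 2 <= l2sum (Rhaly alpha (box n)) (n - 1).
Proof.
  intros [-> | [h ->]].
  - exists 1%nat. split; [lia |]. rewrite l2sum_Rhaly_box, sum_O by lia.
    unfold sigma_m1. simpl. pose proof (pow2_ge_0 (Cmod (alpha 0%nat))). lra.
  - (* the test vector of length [2^(h+1)] sees block [h] with weight [(k+1)/2^(h+1) >= 1/2] *)
    set (n := (2 ^ (h + 1))%nat).
    assert (Hn : (1 <= n)%nat) by apply pow2_pos.
    assert (Hnr : INR n = 2 * 2 ^ h) by (unfold n; rewrite INR_pow2, pow_add; simpl; ring).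
    pose proof (pow2_pos h).
    exists n. split; [exact Hn |].
    rewrite l2sum_Rhaly_box, sqr_sigma by exact Hn.
    eapply Rle_trans; [| apply (sum_n_m_le_subrange _ (2 ^ h) (n - 1) 0 (n - 1)); try lia].
    2: { intros k. apply Rmult_le_pos; [apply Rmult_le_pos; apply pow2_ge_0 |].
         apply Rlt_le, Rinv_0_lt_compat, lt_0_INR. lia. }
    unfold Rdiv. rewrite <- sum_n_m_Rmult_r.
    apply sum_n_m_le_loc. intros k Hk.
    pose proof (le_INR _ _ (proj1 Hk)) as Hk2. rewrite INR_pow2 in Hk2.
    rewrite Hnr, S_INR.
    pose proof (pow2_ge_0 (Cmod (alpha k))). pose proof (pow_lt 2 h ltac:(lra)).
    apply Rmult_le_reg_r with (2 * 2 ^ h); [lra |].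
    assert (0 <= Cmod (alpha k) ^ 2 * (INR k + 1) * (INR k + 1 - 2 ^ h))
      by (apply Rmult_le_pos; [apply Rmult_le_pos |]; lra).
    field_simplify; [nra | lra].
Qed.

Lemma Rbar_lub_ub (E : Rbar -> Prop) (x : Rbar) : E x -> Rbar_le x (Rbar_lub E).
Proof. intros Hx. unfold Rbar_lub. destruct (Rbar_ex_lub E) as [l Hl]. now apply Hl. Qed.

Lemma Rbar_lub_le (E : Rbar -> Prop) (y : Rbar) :
  (forall x, E x -> Rbar_le x y) -> Rbar_le (Rbar_lub E) y.
Proof. intros Hy. unfold Rbar_lub. destruct (Rbar_ex_lub E) as [l Hl]. now apply Hl. Qed.

Lemma Rbar_mult_p_infty_pos (c : R) : 0 < c -> Rbar_mult c p_infty = p_infty.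
Proof.
  intros Hc. unfold Rbar_mult, Rbar_mult'.
  destruct (Rle_dec 0 c) as [Hc' | ]; [| lra].
  destruct (Rle_lt_or_eq_dec 0 c Hc'); [reflexivity | lra].
Qed.

Lemma sigma_family_le_sup_sigma (alpha : nat -> C) (s : R) :
  sigma_family alpha s -> Rbar_le s (sup_sigma alpha).
Proof. intros [-> | [k ->]]; apply Rbar_lub_ub; [left | right; exists k]; reflexivity. Qed.

Lemma sup_sigma_le (alpha : nat -> C) (y : Rbar) :
  (forall s, sigma_family alpha s -> Rbar_le s y) -> Rbar_le (sup_sigma alpha) y.
Proof.
  intros Hy. apply Rbar_lub_le.
  intros x [-> | [k ->]]; apply Hy; [left | right; exists k]; reflexivity.
Qed.

Lemma opnorm_ge (alpha f : nat -> C) :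
  sq_summable f -> l2norm f = 1 -> Rbar_le (l2normE (Rhaly alpha f)) (opnorm alpha).
Proof. intros Hf Hn. apply Rbar_lub_ub. now exists f. Qed.

Lemma opnorm_le (alpha : nat -> C) (y : Rbar) :
  (forall f, sq_summable f -> l2norm f = 1 -> Rbar_le (l2normE (Rhaly alpha f)) y) ->
  Rbar_le (opnorm alpha) y.
Proof. intros Hy. apply Rbar_lub_le. intros x [f [Hf [Hn ->]]]. now apply Hy. Qed.

Lemma sigma_family_le_l2normE_Rhaly_box (alpha : nat -> C) (s : R) :
  sigma_family alpha s ->
  exists n, (1 <= n)%nat /\ Rbar_le (s / sqrt 2) (l2normE (Rhaly alpha (box n))).
Proof.
  intros Hs. destruct (sigma_family_le_l2sum_Rhaly_box alpha s Hs) as [n [Hn Hle]].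
  exists n. split; [exact Hn |].
  eapply Rbar_le_trans; [| apply (l2normE_ge_l2sum _ (n - 1))]. simpl.
  rewrite <- (sqrt_pow2 s (sigma_family_nonneg alpha s Hs)), <- sqrt_div_alt by lra.
  now apply sqrt_le_1_alt.
Qed.

Lemma sigma_family_le_opnorm (alpha : nat -> C) (s : R) :
  sigma_family alpha s -> Rbar_le (s / sqrt 2) (opnorm alpha).
Proof.
  intros Hs. destruct (sigma_family_le_l2normE_Rhaly_box alpha s Hs) as [n [Hn Hle]].
  destruct (box_unit n Hn) as [Hsq Hnorm].
  exact (Rbar_le_trans _ _ _ Hle (opnorm_ge alpha (box n) Hsq Hnorm)).
Qed.

Lemma sigma_bounded_of_Rhaly_bounded (alpha : nat -> C) :
  Rhaly_bounded alpha -> sigma_bounded alpha.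
Proof.
  intros [M HM].
  assert (Hfam : forall s, sigma_family alpha s -> s <= sqrt 2 * M).
  { intros s Hs. destruct (sigma_family_le_l2normE_Rhaly_box alpha s Hs) as [n [Hn Hle]].
    destruct (box_unit n Hn) as [Hsq Hnorm]. destruct (HM (box n) Hsq) as [HR HRM].
    rewrite l2normE_l2norm in Hle by exact HR. simpl in Hle.
    rewrite Hnorm, Rmult_1_r in HRM.
    pose proof (sqrt_lt_R0 2 ltac:(lra)).
    apply Rmult_le_reg_l with (/ sqrt 2); [now apply Rinv_0_lt_compat |].
    field_simplify; lra. }
  exists (sqrt 2 * M). split; [apply Hfam; now left | intros k; apply Hfam; right; now exists k].
Qed.

Lemma Rhaly_bounded_of_sigma_bounded (alpha : nat -> C) :
  sigma_bounded alpha -> Rhaly_bounded alpha.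
Proof.
  intros [M [H0 Hk]]. exists (4 * M). intros f Hf. now apply Rhaly_l2norm_le.
Qed.

Lemma sup_sigma_le_opnorm (alpha : nat -> C) :
  Rbar_le (Rbar_mult (/ sqrt 2) (sup_sigma alpha)) (opnorm alpha).
Proof.
  pose proof (sqrt_lt_R0 2 ltac:(lra)) as Hsqrt2.
  pose proof (sigma_family_le_opnorm alpha _ (or_introl eq_refl)) as Hm1.
  destruct (opnorm alpha) as [o | |] eqn:Ho; [| now destruct (Rbar_mult _ _) | contradiction].
  assert (Hsup : Rbar_le (sup_sigma alpha) (sqrt 2 * o)).
  { apply sup_sigma_le. intros s Hs. pose proof (sigma_family_le_opnorm alpha s Hs) as H.
    rewrite Ho in H. simpl in H |- *.
    apply Rmult_le_reg_l with (/ sqrt 2); [now apply Rinv_0_lt_compat |].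
    field_simplify; lra. }
  pose proof (sigma_family_le_sup_sigma alpha _ (or_introl eq_refl)) as Hge.
  destruct (sup_sigma alpha) as [e | |]; simpl in Hsup, Hge |- *; try contradiction.
  apply Rmult_le_reg_l with (sqrt 2); [exact Hsqrt2 |]. field_simplify; lra.
Qed.

Lemma opnorm_le_sup_sigma (alpha : nat -> C) :
  Rbar_le (opnorm alpha) (Rbar_mult (4 * sqrt 2) (sup_sigma alpha)).
Proof.
  pose proof (sqrt_lt_R0 2 ltac:(lra)) as Hsqrt2.
  pose proof (sigma_family_le_sup_sigma alpha _ (or_introl eq_refl)) as Hge.
  pose proof (sigma_family_le_sup_sigma alpha) as Hsup.
  destruct (sup_sigma alpha) as [e | |]; simpl in Hge; try contradiction.
  - apply opnorm_le. intros f Hf Hn.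
    destruct (Rhaly_l2norm_le alpha e f Hge (fun k => Hsup _ (or_intror (ex_intro _ k eq_refl))) Hf)
      as [HR HRe].
    rewrite l2normE_l2norm by exact HR. simpl.
    rewrite Hn, Rmult_1_r in HRe.
    assert (1 <= sqrt 2) by (rewrite <- sqrt_1; apply sqrt_le_1_alt; lra).
    pose proof (Cmod_ge_0 (alpha 0%nat)). unfold sigma_m1 in Hge. nra.
  - rewrite Rbar_mult_p_infty_pos by lra. now destruct (opnorm alpha).
Qed.

Theorem theorem2p4 (alpha : nat -> C) (Halpha : sq_summable alpha) :
  (Rhaly_bounded alpha <-> sigma_bounded alpha) /\
  Rbar_le (Rbar_mult (/ sqrt 2) (sup_sigma alpha)) (opnorm alpha) /\
  Rbar_le (opnorm alpha) (Rbar_mult (4 * sqrt 2) (sup_sigma alpha)).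
Proof.
  split; [split |].
  - apply sigma_bounded_of_Rhaly_bounded.
  - apply Rhaly_bounded_of_sigma_bounded.
  - split; [apply sup_sigma_le_opnorm | apply opnorm_le_sup_sigma].
Qed.
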